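(* Let $x^1,\dots,x^{\ell_1},\hat x^1,\dots,\hat x^{\ell_2}\in\mathbb{R}^n$ with $\ell_1\ge1$, let $\mathcal{P}=\{\sum_{i=1}^{\ell_1}\theta_ix^i+\sum_{j=1}^{\ell_2}\hat\theta_j\hat x^j:\theta_i\ge0,\ \sum_i\theta_i=1,\ \hat\theta_j\ge0\}$, let $X=[x^1,\dots,x^{\ell_1},\hat x^1,\dots,\hat x^{\ell_2}]\in\mathbb{R}^{n\times(\ell_1+\ell_2)}$, and let $A\in\mathbb{R}^{n\times n}$. Then $\mathcal{P}$ is an invariant set for the continuous system $\dot x(t)=Ax(t)$ if and only if there exists a matrix $\tilde L\in\mathbb{R}^{(\ell_1+\ell_2)\times(\ell_1+\ell_2)}$ whose off-diagonal entries are all nonnegative such that $X\tilde L=AX$ and $\bar 1\tilde L=0$, where $\bar 1=(1,\dots,1,0,\dots,0)$ is the row vector with $\ell_1$ ones followed by $\ell_2$ zeros (i.e., in every column of $\tilde L$ the first $\ell_1$ entries sum to zero).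
   Context: A set $\mathcal{S}\subseteq\mathbb{R}^n$ is an invariant set for the continuous system $\dot x=Ax$ if $x(0)\in\mathcal{S}$ implies $x(t)\in\mathcal{S}$ for all $t\ge 0$; equivalently $e^{At}\mathcal{S}\subseteq\mathcal{S}$ for all $t\ge0$. *)

From Stdlib Require Import Reals Lra.
Open Scope R_scope.

(* Vectors in R^n are functions nat -> R, only indices < n matter;
   matrices are functions nat -> nat -> R (row, column). *)

Fixpoint rsum (n : nat) (f : nat -> R) : R :=
  match n with
  | O => 0
  | S k => rsum k f + f k
  end.

Definition mat_vec (n : nat) (A : nat -> nat -> R) (y : nat -> R) (i : nat) : R :=
  rsum n (fun j => A i j * y j).

Definition is_solution (n : nat) (A : nat -> nat -> R) (x : R -> nat -> R) : Prop :=
  forall (t : R) (i : nat), (i < n)%nat ->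
    derivable_pt_lim (fun s => x s i) t (mat_vec n A (x t) i).

Definition invariant_cont (n : nat) (A : nat -> nat -> R) (S : (nat -> R) -> Prop) : Prop :=
  forall x : R -> nat -> R, is_solution n A x ->
    S (x 0) -> forall t : R, 0 <= t -> S (x t).

(* The polyhedron P generated by vertices xs 0..l1-1 (convex part) and
   rays xh 0..l2-1 (conic part).  xs i k = k-th coordinate of x^(i+1). *)
Definition polyP (n l1 l2 : nat) (xs xh : nat -> nat -> R) (y : nat -> R) : Prop :=
  exists theta thetah : nat -> R,
    (forall i, (i < l1)%nat -> 0 <= theta i) /\
    rsum l1 theta = 1 /\
    (forall j, (j < l2)%nat -> 0 <= thetah j) /\
    (forall k, (k < n)%nat ->
       y k = rsum l1 (fun i => theta i * xs i k) + rsum l2 (fun j => thetah j * xh j k)).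

Definition Xmat (l1 : nat) (xs xh : nat -> nat -> R) (k p : nat) : R :=
  if Nat.ltb p l1 then xs p k else xh (p - l1)%nat k.

(* Sufficiency: the coefficients theta(t) = e^{L t} theta(0) of a point of P
   stay nonnegative because L is Metzler, and keep their first l1 entries
   summing to 1 because the first l1 entries of every column of L sum to 0;
   since X L = A X, the curve X theta(t) solves x' = A x, so by uniqueness it is
   the trajectory, which therefore stays in P.
   Necessity: column q of L must write A X_q as a nonnegative combination of the
   feasible directions of P at its generator X_q.
   Otherwise Farkas' lemma yields a functional w that is positive on A X_q but
   bounded on P by its value at the vertex x^q (for a ray: bounded on the
   half-line x^1 + s xh^q); as d/dt w(e^{At} y) = w(A y) > 0 at t = 0, the
   trajectory would leave P. *)

From Stdlib Require Import Reals Lra Lia Classical.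
From Coquelicot Require Import Coquelicot.
Open Scope R_scope.

Lemma rsum_ext n f g : (forall i, (i < n)%nat -> f i = g i) -> rsum n f = rsum n g.
Proof.
  induction n as [|n IH]; intros H; simpl; [reflexivity|].
  rewrite IH, H; [reflexivity | lia | intros; apply H; lia].
Qed.

Lemma rsum_plus n f g : rsum n (fun i => f i + g i) = rsum n f + rsum n g.
Proof. induction n as [|n IH]; simpl; [lra | rewrite IH; lra]. Qed.

Lemma rsum_scal n c f : rsum n (fun i => c * f i) = c * rsum n f.
Proof. induction n as [|n IH]; simpl; [lra | rewrite IH; lra]. Qed.

Lemma rsum_zero n f : (forall i, (i < n)%nat -> f i = 0) -> rsum n f = 0.
Proof.
  induction n as [|n IH]; intros H; simpl; [reflexivity|].
  rewrite IH, H; [lra | lia | intros; apply H; lia].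
Qed.

Lemma rsum_swap n m f :
  rsum n (fun i => rsum m (fun j => f i j)) = rsum m (fun j => rsum n (fun i => f i j)).
Proof.
  induction n as [|n IH]; simpl.
  - symmetry; apply rsum_zero; reflexivity.
  - rewrite IH, <- rsum_plus; reflexivity.
Qed.

Lemma rsum_le n f g : (forall i, (i < n)%nat -> f i <= g i) -> rsum n f <= rsum n g.
Proof.
  induction n as [|n IH]; intros H; simpl; [lra|].
  apply Rplus_le_compat; [apply IH; intros; apply H | apply H]; lia.
Qed.

Lemma rsum_nonneg n f : (forall i, (i < n)%nat -> 0 <= f i) -> 0 <= rsum n f.
Proof.
  intros H; rewrite <- (rsum_zero n (fun _ => 0)) by reflexivity.
  apply rsum_le, H.
Qed.

Lemma rsum_abs_le n f : Rabs (rsum n f) <= rsum n (fun i => Rabs (f i)).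
Proof.
  induction n as [|n IH]; simpl; [rewrite Rabs_R0; lra|].
  eapply Rle_trans; [apply Rabs_triang | lra].
Qed.

Lemma term_le_rsum n f k :
  (forall i, (i < n)%nat -> 0 <= f i) -> (k < n)%nat -> f k <= rsum n f.
Proof.
  induction n as [|n IH]; intros H Hk; simpl; [lia|].
  assert (0 <= rsum n f) by (apply rsum_nonneg; intros; apply H; lia).
  destruct (Nat.eq_dec k n) as [->|Hkn]; [lra|].
  assert (f k <= rsum n f) by (apply IH; [intros; apply H|]; lia).
  assert (0 <= f n) by (apply H; lia).
  lra.
Qed.

Lemma rsum_split a b f : rsum (a + b) f = rsum a f + rsum b (fun j => f (a + j)%nat).
Proof.
  induction b as [|b IH]; simpl; [rewrite Nat.add_0_r; lra|].
  rewrite <- plus_n_Sm; simpl; rewrite IH; lra.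
Qed.

Lemma rsum_prefix a b f :
  rsum (a + b) (fun p => if (p <? a)%nat then f p else 0) = rsum a f.
Proof.
  rewrite rsum_split, (rsum_zero b).
  - rewrite Rplus_0_r; apply rsum_ext; intros i Hi.
    destruct (Nat.ltb_spec i a); [reflexivity | lia].
  - intros j _; destruct (Nat.ltb_spec (a + j) a); [lia | reflexivity].
Qed.

Definition delta (p q : nat) : R := if (p =? q)%nat then 1 else 0.

Lemma rsum_delta n y k : (k < n)%nat -> rsum n (fun q => delta k q * y q) = y k.
Proof.
  induction n as [|n IH]; intros Hk; simpl; [lia|].
  unfold delta at 2; destruct (Nat.eqb_spec k n) as [->|Hkn].
  - rewrite rsum_zero; [lra|].
    intros i Hi; unfold delta; destruct (Nat.eqb_spec n i); [lia | lra].
  - rewrite IH by lia; lra.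
Qed.

Lemma delta_neq p q : p <> q -> delta p q = 0.
Proof. intros H; unfold delta; destruct (Nat.eqb_spec p q); [contradiction | reflexivity]. Qed.

Definition dot n (w v : nat -> R) : R := rsum n (fun k => w k * v k).

Definition col (M : nat -> nat -> R) (p : nat) : nat -> R := fun k => M k p.

Lemma dot_ext n w u v : (forall k, (k < n)%nat -> u k = v k) -> dot n w u = dot n w v.
Proof. intros H; apply rsum_ext; intros k Hk; rewrite H; auto. Qed.

Lemma dot_comm n u v : dot n u v = dot n v u.
Proof. apply rsum_ext; intros; ring. Qed.

Lemma dot_lincomb n w F a u c v :
  (forall k, (k < n)%nat -> F k = a * u k + c * v k) ->
  dot n w F = a * dot n w u + c * dot n w v.
Proof.
  intros H; unfold dot; rewrite <- !rsum_scal, <- rsum_plus.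
  apply rsum_ext; intros k Hk; rewrite H by auto; ring.
Qed.

Lemma dot_mat_vec n m w M y :
  dot n w (mat_vec m M y) = rsum m (fun p => dot n w (col M p) * y p).
Proof.
  unfold dot, mat_vec, col.
  rewrite (rsum_ext n _ (fun k => rsum m (fun p => w k * M k p * y p)))
    by (intros; rewrite <- rsum_scal; apply rsum_ext; intros; ring).
  rewrite rsum_swap; apply rsum_ext; intros p _.
  rewrite Rmult_comm, <- rsum_scal; apply rsum_ext; intros; ring.
Qed.

Lemma mat_vec_minus n A u v k :
  mat_vec n A (fun j => u j - v j) k = mat_vec n A u k - mat_vec n A v k.
Proof. unfold mat_vec; induction n as [|n IH]; simpl; [ring | rewrite IH; ring]. Qed.

(** * Farkas' lemma *)

Definition in_cone n m (g : nat -> nat -> R) (b : nat -> R) : Prop :=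
  exists mu : nat -> R, (forall i, (i < m)%nat -> 0 <= mu i) /\
    forall k, (k < n)%nat -> b k = rsum m (fun i => mu i * g i k).

Lemma in_cone_S n m g b : in_cone n m g b -> in_cone n (S m) g b.
Proof.
  intros [mu [Hmu Hb]].
  exists (fun i => if (i <? m)%nat then mu i else 0); split.
  - intros i _; destruct (Nat.ltb_spec i m); [apply Hmu; auto | lra].
  - intros k Hk; simpl; rewrite Nat.ltb_irrefl, Hb by auto.
    rewrite Rmult_0_l, Rplus_0_r; apply rsum_ext; intros i Hi.
    destruct (Nat.ltb_spec i m); [reflexivity | lia].
Qed.

(* The inductive step of Farkas' lemma projects everything along [g m] onto
   the hyperplane [w = 0]: [v] becomes [al v - (w.v) g m] with [al = w . g m]. *)
Lemma in_cone_of_projection n m g b w :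
  (forall i, (i < m)%nat -> dot n w (g i) <= 0) -> 0 < dot n w (g m) -> 0 <= dot n w b ->
  in_cone n m (fun i k => dot n w (g m) * g i k - dot n w (g i) * g m k)
    (fun k => dot n w (g m) * b k - dot n w b * g m k) ->
  in_cone n (S m) g b.
Proof.
  intros Hw Hal Hwb [mu [Hmu Hb]].
  set (al := dot n w (g m)) in *.
  set (T := rsum m (fun i => mu i * dot n w (g i))).
  assert (HT : T <= 0).
  { rewrite <- (rsum_zero m (fun _ => 0)) by reflexivity.
    apply rsum_le; intros i Hi; specialize (Hmu i Hi); specialize (Hw i Hi); nra. }
  exists (fun i => if (i <? m)%nat then mu i else (dot n w b - T) / al); split.
  - intros i _; destruct (Nat.ltb_spec i m); [apply Hmu; auto|].
    apply Rmult_le_pos; [lra | left; apply Rinv_0_lt_compat; lra].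
  - intros k Hk; simpl; rewrite Nat.ltb_irrefl.
    rewrite (rsum_ext m _ (fun i => mu i * g i k))
      by (intros i Hi; destruct (Nat.ltb_spec i m); [reflexivity | lia]).
    specialize (Hb k Hk).
    rewrite (rsum_ext m _ (fun i => al * (mu i * g i k) + - g m k * (mu i * dot n w (g i))))
      in Hb by (intros; ring).
    rewrite rsum_plus, !rsum_scal in Hb; fold T in Hb.
    apply (Rmult_eq_reg_l al); [|lra].
    field_simplify; [|lra]. nra.
Qed.

Lemma dot_projection n w w' u v :
  dot n w u <> 0 ->
  dot n w u * dot n (fun k => w' k - dot n w' u / dot n w u * w k) v
  = dot n w' (fun k => dot n w u * v k - dot n w v * u k).
Proof.
  intros Hu.
  rewrite (dot_comm n (fun k => _) v).
  rewrite (dot_lincomb n v _ 1 w' (- (dot n w' u / dot n w u)) w) by (intros; ring).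
  rewrite (dot_lincomb n w' (fun k => dot n w u * v k - dot n w v * u k)
             (dot n w u) v (- dot n w v) u) by (intros; ring).
  rewrite (dot_comm n v w'), (dot_comm n v w). field; auto.
Qed.

Lemma farkas n m g b :
  ~ in_cone n m g b ->
  exists w, (forall i, (i < m)%nat -> dot n w (g i) <= 0) /\ 0 < dot n w b.
Proof.
  revert g b; induction m as [|m IH]; intros g b Hb.
  - exists b; split; [intros; lia|].
    destruct (classic (exists k, (k < n)%nat /\ b k <> 0)) as [[k [Hk Hbk]]|Hb0].
    + eapply Rlt_le_trans; [|apply (term_le_rsum n (fun k => b k * b k) k)]; auto.
      * assert (0 < b k * b k) by (apply Rsqr_pos_lt; auto); lra.
      * intros; apply Rle_0_sqr.
    + exfalso; apply Hb; exists (fun _ => 0); split; [intros; lra|].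
      intros k Hk; apply NNPP; intros Hbk; apply Hb0; eauto.
  - destruct (IH g b) as [w [Hw Hwb]]; [intros H; apply Hb, in_cone_S, H|].
    destruct (Rle_or_lt (dot n w (g m)) 0) as [Hwm|Hwm].
    { exists w; split; auto.
      intros i Hi; destruct (Nat.eq_dec i m) as [->|]; [auto | apply Hw; lia]. }
    destruct (IH (fun i k => dot n w (g m) * g i k - dot n w (g i) * g m k)
                 (fun k => dot n w (g m) * b k - dot n w b * g m k)) as [w' [Hw' Hw'b]].
    { intros H; apply Hb, (in_cone_of_projection n m g b w); auto; lra. }
    exists (fun k => w' k - dot n w' (g m) / dot n w (g m) * w k); split.
    + intros i Hi; apply (Rmult_le_reg_l (dot n w (g m))); auto.
      rewrite Rmult_0_r, dot_projection by lra.
      destruct (Nat.eq_dec i m) as [->|Him]; [|apply Hw'; lia].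
      rewrite (dot_ext n w' _ (fun _ => 0)) by (intros; ring).
      unfold dot; rewrite rsum_zero; [lra | intros; ring].
    + apply (Rmult_lt_reg_l (dot n w (g m))); auto.
      rewrite Rmult_0_r, dot_projection by lra; auto.
Qed.

Lemma derivable_pt_lim_rsum n (f : nat -> R -> R) d t :
  (forall q, (q < n)%nat -> derivable_pt_lim (f q) t (d q)) ->
  derivable_pt_lim (fun s => rsum n (fun q => f q s)) t (rsum n d).
Proof.
  induction n as [|n IH]; intros H; simpl; [apply derivable_pt_lim_const|].
  apply (derivable_pt_lim_plus (fun s => rsum n (fun q => f q s)) (f n));
    [apply IH; intros; apply H | apply H]; lia.
Qed.

Lemma derivable_pt_lim_exp_scal c t :
  derivable_pt_lim (fun s => exp (c * s)) t (c * exp (c * t)).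
Proof. apply is_derive_Reals; auto_derive; [auto | ring]. Qed.

Lemma mvt_from_0 f f' t :
  (forall s, derivable_pt_lim f s (f' s)) -> exists c, f t - f 0 = f' c * t.
Proof.
  intros Hf.
  destruct (MVT_cor4 f f' 0 (Rabs t) (fun c _ => proj2 (is_derive_Reals _ _ _) (Hf c)) t)
    as [c [Hc _]]; [rewrite Rminus_0_r; lra|].
  exists c; rewrite Hc; ring.
Qed.

Lemma deriv_nonpos_le f f' t :
  (forall s, derivable_pt_lim f s (f' s)) -> (forall s, f' s <= 0) -> 0 <= t -> f t <= f 0.
Proof.
  intros Hf Hf' Ht; destruct (mvt_from_0 f f' t Hf) as [c Hc].
  specialize (Hf' c); nra.
Qed.

Lemma deriv_zero_const f t : (forall s, derivable_pt_lim f s 0) -> f t = f 0.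
Proof. intros Hf; destruct (mvt_from_0 f (fun _ => 0) t Hf) as [c Hc]; lra. Qed.

Lemma deriv_pos_increases h l :
  derivable_pt_lim h 0 l -> 0 < l -> exists t, 0 < t /\ h 0 < h t.
Proof.
  intros H Hl; destruct (H (l / 2) ltac:(lra)) as [d Hd].
  pose proof (cond_pos d) as Hdp.
  specialize (Hd (d / 2) ltac:(lra) ltac:(rewrite Rabs_right; lra)).
  rewrite Rplus_0_l in Hd; apply Rabs_def2 in Hd as [_ Hd].
  exists (d / 2); split; [lra|].
  assert (0 < (h (d / 2) - h 0) / (d / 2)) by lra.
  enough (0 < (h (d / 2) - h 0) / (d / 2) * (d / 2)) by (field_simplify in H1; lra).
  apply Rmult_lt_0_compat; lra.
Qed.

(** * The matrix exponential *)

Lemma INR_fact_pos k : 0 < INR (Factorial.fact k).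
Proof. apply lt_0_INR, Factorial.lt_O_fact. Qed.

Lemma is_pseries_zero x : is_pseries (fun _ => 0) x 0.
Proof.
  apply is_pseries_R.
  pose proof (is_series_scal_r 0 _ _ (proj1 (is_pseries_R _ _ _) (is_exp_Reals x))) as H.
  rewrite Rmult_0_r in H; eapply is_series_ext; [|exact H]; intros; simpl; ring.
Qed.

Lemma is_pseries_rsum n (c : nat -> R) (a : nat -> nat -> R) x :
  (forall r, (r < n)%nat -> ex_pseries (a r) x) ->
  is_pseries (fun k => rsum n (fun r => c r * a r k)) x (rsum n (fun r => c r * PSeries (a r) x)).
Proof.
  induction n as [|n IH]; intros H; simpl; [apply is_pseries_zero|].
  pose proof (is_pseries_scal (c n) (a n) x _ (Rmult_comm _ _)
                (PSeries_correct _ _ (H n ltac:(lia)))) as Hn.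
  exact (is_pseries_plus _ _ _ _ _ (IH (fun r Hr => H r ltac:(lia))) Hn).
Qed.

Section MatrixExponential.

Variables (m : nat) (B : nat -> nat -> R).

Fixpoint mpow (k : nat) : nat -> nat -> R :=
  match k with
  | O => delta
  | S k => fun p q => rsum m (fun r => B p r * mpow k r q)
  end.

Definition expm_coef (p q k : nat) : R := mpow k p q / INR (Factorial.fact k).

Definition expm (t : R) (p q : nat) : R := PSeries (expm_coef p q) t.

Definition flow (y : nat -> R) (t : R) : nat -> R := mat_vec m (expm t) y.

Definition abs_sum : R := rsum m (fun p => rsum m (fun r => Rabs (B p r))).

Lemma row_abs_sum_le p : (p < m)%nat -> rsum m (fun r => Rabs (B p r)) <= abs_sum.
Proof.
  intros Hp; apply (term_le_rsum m (fun p => rsum m (fun r => Rabs (B p r)))); auto.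
  intros; apply rsum_nonneg; intros; apply Rabs_pos.
Qed.

Lemma abs_sum_ge0 : 0 <= abs_sum.
Proof. apply rsum_nonneg; intros; apply rsum_nonneg; intros; apply Rabs_pos. Qed.

Lemma mpow_abs_le k p q : (p < m)%nat -> Rabs (mpow k p q) <= abs_sum ^ k.
Proof.
  revert p; induction k as [|k IH]; intros p Hp; simpl.
  - unfold delta; destruct (p =? q)%nat; rewrite ?Rabs_R1, ?Rabs_R0; lra.
  - eapply Rle_trans; [apply rsum_abs_le|].
    eapply Rle_trans with (rsum m (fun r => abs_sum ^ k * Rabs (B p r))).
    + apply rsum_le; intros r Hr; rewrite Rabs_mult, Rmult_comm.
      apply Rmult_le_compat_r; [apply Rabs_pos | auto].
    + rewrite rsum_scal, Rmult_comm.
      apply Rmult_le_compat_r; [apply pow_le, abs_sum_ge0 | apply row_abs_sum_le; auto].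
Qed.

Lemma expm_coef_disk p q r : (p < m)%nat -> CV_disk (expm_coef p q) r.
Proof.
  intros Hp; unfold CV_disk.
  apply (@ex_series_le R_AbsRing R_CompleteNormedModule _
           (fun k => (abs_sum * Rabs r) ^ k / INR (Factorial.fact k))).
  - intros k; change (norm ?x) with (Rabs x); rewrite Rabs_Rabsolu.
    unfold expm_coef, Rdiv.
    rewrite !Rabs_mult, Rabs_inv, (Rabs_right (INR _)), <- RPow_abs, Rpow_mult_distr
      by (left; apply INR_fact_pos).
    pose proof (mpow_abs_le k p q Hp).
    assert (0 <= / INR (Factorial.fact k) * Rabs r ^ k).
    { apply Rmult_le_pos; [left; apply Rinv_0_lt_compat, INR_fact_pos | apply pow_le, Rabs_pos]. }
    nra.
  - exists (exp (abs_sum * Rabs r)).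
    pose proof (proj1 (is_pseries_R _ _ _) (is_exp_Reals (abs_sum * Rabs r))) as He.
    eapply is_series_ext; [|exact He]; intros k; simpl; unfold Rdiv; ring.
Qed.

Lemma expm_coef_radius p q x : (p < m)%nat -> Rbar_lt (Rabs x) (CV_radius (expm_coef p q)).
Proof.
  intros Hp; destruct (Lub_Rbar_correct (CV_disk (expm_coef p q))) as [Hub _].
  specialize (Hub (Rabs x + 1) (expm_coef_disk p q _ Hp)).
  unfold CV_radius; destruct (Lub_Rbar (CV_disk (expm_coef p q))); simpl in *; auto; lra.
Qed.

Lemma PS_derive_expm_coef p q k :
  PS_derive (expm_coef p q) k = rsum m (fun r => B p r * expm_coef r q k).
Proof.
  unfold PS_derive, expm_coef; simpl mpow.
  change (Factorial.fact (S k)) with (S k * Factorial.fact k)%nat; rewrite mult_INR.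
  rewrite (rsum_ext m (fun r => B p r * (mpow k r q / INR (Factorial.fact k)))
             (fun r => / INR (Factorial.fact k) * (B p r * mpow k r q)))
    by (intros; unfold Rdiv; ring).
  rewrite rsum_scal; pose proof (INR_fact_pos k); pose proof (pos_INR k).
  rewrite S_INR; field; lra.
Qed.

Lemma expm_deriv t p q : (p < m)%nat ->
  derivable_pt_lim (fun s => expm s p q) t (rsum m (fun r => B p r * expm t r q)).
Proof.
  intros Hp; apply is_derive_Reals; unfold expm.
  pose proof (is_derive_PSeries (expm_coef p q) t (expm_coef_radius p q t Hp)) as H.
  rewrite (PSeries_ext _ (fun k => rsum m (fun r => B p r * expm_coef r q k))) in H
    by apply PS_derive_expm_coef.
  rewrite (is_pseries_unique _ _ _
             (is_pseries_rsum m (fun r => B p r) (fun r => expm_coef r q) t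
                (fun r Hr => CV_disk_correct _ _ (expm_coef_disk r q t Hr)))) in H.
  exact H.
Qed.

Lemma expm_0 p q : expm 0 p q = delta p q.
Proof. unfold expm; rewrite PSeries_0; unfold expm_coef; simpl; lra. Qed.

Hypothesis B_nonneg : forall p r, (p < m)%nat -> (r < m)%nat -> 0 <= B p r.

Lemma mpow_nonneg k p q : (p < m)%nat -> 0 <= mpow k p q.
Proof.
  revert p; induction k as [|k IH]; intros p Hp; simpl.
  - unfold delta; destruct (p =? q)%nat; lra.
  - apply rsum_nonneg; intros; apply Rmult_le_pos; auto.
Qed.

Lemma expm_nonneg t p q : (p < m)%nat -> 0 <= t -> 0 <= expm t p q.
Proof.
  intros Hp Ht; rewrite <- (PSeries_const_0 t); unfold expm, PSeries.
  apply Series_le.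
  - intros k; rewrite Rmult_0_l; split; [lra|].
    apply Rmult_le_pos; [|apply pow_le; auto].
    apply Rmult_le_pos; [apply mpow_nonneg; auto | left; apply Rinv_0_lt_compat, INR_fact_pos].
  - eapply ex_series_ext; [|exact (CV_disk_correct _ _ (expm_coef_disk p q t Hp))].
    intros k; apply Rmult_comm.
Qed.

End MatrixExponential.

Lemma flow_0 m B y k : (k < m)%nat -> flow m B y 0 k = y k.
Proof.
  intros Hk; unfold flow, mat_vec.
  rewrite (rsum_ext _ _ (fun q => delta k q * y q)) by (intros; rewrite expm_0; reflexivity).
  apply rsum_delta, Hk.
Qed.

Lemma flow_is_solution m B y : is_solution m B (flow m B y).
Proof.
  intros t k Hk; unfold flow at 2.
  change (mat_vec m B ?v k) with (dot m (B k) v); rewrite dot_mat_vec.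
  apply derivable_pt_lim_rsum; intros q _.
  apply (derivable_pt_lim_scal_right (fun s => expm m B s k q)), expm_deriv, Hk.
Qed.

Lemma flow_lincomb m B y d c t k :
  flow m B (fun j => y j + c * d j) t k = flow m B y t k + c * flow m B d t k.
Proof. unfold flow, mat_vec; rewrite <- rsum_scal, <- rsum_plus; apply rsum_ext; intros; ring. Qed.

Lemma flow_nonneg m B y t k :
  (forall p r, (p < m)%nat -> (r < m)%nat -> 0 <= B p r) ->
  (forall q, (q < m)%nat -> 0 <= y q) -> (k < m)%nat -> 0 <= t -> 0 <= flow m B y t k.
Proof.
  intros HB Hy Hk Ht; apply rsum_nonneg; intros q Hq.
  apply Rmult_le_pos; [apply expm_nonneg|]; auto.
Qed.

(** * Linear differential equations *)

Lemma dot_solution_deriv n A x w t :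
  is_solution n A x ->
  derivable_pt_lim (fun s => dot n w (x s)) t (dot n w (mat_vec n A (x t))).
Proof.
  intros Hx; apply derivable_pt_lim_rsum; intros k Hk.
  apply (derivable_pt_lim_scal (fun s => x s k)), Hx, Hk.
Qed.

Lemma sqnorm_solution_deriv n A x t :
  is_solution n A x ->
  derivable_pt_lim (fun s => dot n (x s) (x s)) t (2 * dot n (x t) (mat_vec n A (x t))).
Proof.
  intros Hx; unfold dot at 2; rewrite <- rsum_scal; apply derivable_pt_lim_rsum; intros k Hk.
  replace (2 * (x t k * mat_vec n A (x t) k))
    with (mat_vec n A (x t) k * x t k + x t k * mat_vec n A (x t) k) by ring.
  apply (derivable_pt_lim_mult (fun s => x s k) (fun s => x s k)); apply Hx, Hk.
Qed.

Lemma is_solution_minus n A x z :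
  is_solution n A x -> is_solution n A z -> is_solution n A (fun s j => x s j - z s j).
Proof.
  intros Hx Hz t k Hk; rewrite mat_vec_minus.
  apply (derivable_pt_lim_minus (fun s => x s k) (fun s => z s k)); auto.
Qed.

Lemma dot_mat_vec_le n A w : dot n w (mat_vec n A w) <= abs_sum n A * dot n w w.
Proof.
  set (f := dot n w w).
  assert (Hsq : forall k, (k < n)%nat -> w k * w k <= f)
    by (intros k Hk; apply (term_le_rsum n (fun k => w k * w k)); auto; intros; nra).
  unfold abs_sum; rewrite Rmult_comm, <- rsum_scal.
  apply rsum_le; intros k Hk; unfold mat_vec; rewrite <- !rsum_scal.
  apply rsum_le; intros j Hj.
  assert (Hkj : Rabs (w k) * Rabs (w j) <= f).
  { pose proof (Rsqr_abs (w k)); pose proof (Rsqr_abs (w j)); unfold Rsqr in *.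
    pose proof (Hsq k Hk); pose proof (Hsq j Hj).
    nra. }
  eapply Rle_trans; [apply Rle_abs|].
  rewrite !Rabs_mult.
  pose proof (Rabs_pos (A k j)); nra.
Qed.

Lemma sqnorm_solution_le n A x t :
  is_solution n A x -> 0 <= t ->
  dot n (x t) (x t) <= exp (2 * abs_sum n A * t) * dot n (x 0) (x 0).
Proof.
  intros Hx Ht; set (K := abs_sum n A).
  set (f := fun s => dot n (x s) (x s)).
  assert (Hle : exp (- (2 * K) * t) * f t <= exp (- (2 * K) * 0) * f 0).
  { apply (deriv_nonpos_le (fun s => exp (- (2 * K) * s) * f s)
             (fun s => - (2 * K) * exp (- (2 * K) * s) * f s
                       + exp (- (2 * K) * s) * (2 * dot n (x s) (mat_vec n A (x s))))); auto.
    - intros s; apply (derivable_pt_lim_mult (fun s => exp (- (2 * K) * s)) f).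
      + apply derivable_pt_lim_exp_scal.
      + apply sqnorm_solution_deriv, Hx.
    - intros s; pose proof (dot_mat_vec_le n A (x s)); pose proof (exp_pos (- (2 * K) * s)).
      fold K f in H; unfold f in *; nra. }
  rewrite Rmult_0_r, exp_0, Rmult_1_l in Hle.
  change (f t <= exp (2 * K * t) * f 0).
  replace (f t) with (exp (2 * K * t) * (exp (- (2 * K) * t) * f t))
    by (rewrite <- Rmult_assoc, <- exp_plus; replace (2 * K * t + - (2 * K) * t) with 0 by ring;
        rewrite exp_0; ring).
  apply Rmult_le_compat_l; [left; apply exp_pos | exact Hle].
Qed.

Lemma is_solution_unique n A x z t k :
  is_solution n A x -> is_solution n A z ->
  (forall j, (j < n)%nat -> x 0 j = z 0 j) -> 0 <= t -> (k < n)%nat -> x t k = z t k.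
Proof.
  intros Hx Hz H0 Ht Hk.
  set (d := fun s j => x s j - z s j).
  pose proof (sqnorm_solution_le n A d t (is_solution_minus n A x z Hx Hz) Ht) as Hd.
  unfold dot in Hd; rewrite (rsum_zero n (fun j => d 0 j * d 0 j)) in Hd
    by (intros j Hj; unfold d; rewrite H0 by auto; ring).
  assert (d t k * d t k <= 0).
  { eapply Rle_trans; [apply (term_le_rsum n (fun j => d t j * d t j)); auto; intros; nra|].
    lra. }
  assert (d t k = 0) by nra.
  unfold d in *; lra.
Qed.

Lemma dot_flow_0 n A y w : dot n w (flow n A y 0) = dot n w y.
Proof. apply dot_ext; intros; apply flow_0; auto. Qed.

Lemma dot_flow_deriv_0 n A y w :
  derivable_pt_lim (fun s => dot n w (flow n A y s)) 0 (dot n w (mat_vec n A y)).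
Proof.
  replace (dot n w (mat_vec n A y)) with (dot n w (mat_vec n A (flow n A y 0))).
  - apply dot_solution_deriv, flow_is_solution.
  - apply dot_ext; intros k _; apply rsum_ext; intros j Hj; rewrite flow_0; auto.
Qed.

Lemma flow_support n A y w :
  (forall t, 0 <= t -> dot n w (flow n A y t) <= dot n w y) -> dot n w (mat_vec n A y) <= 0.
Proof.
  intros Hsup; apply Rnot_lt_le; intros Hpos.
  destruct (deriv_pos_increases _ _ (dot_flow_deriv_0 n A y w) Hpos) as [t [Ht Hlt]].
  rewrite dot_flow_0 in Hlt; specialize (Hsup t ltac:(lra)); lra.
Qed.

Lemma flow_recession n A y d w M :
  (forall s t, 0 <= s -> 0 <= t -> dot n w (flow n A (fun k => y k + s * d k) t) <= M) ->
  dot n w d = 0 -> dot n w (mat_vec n A d) <= 0.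
Proof.
  intros Hbd Hd; apply Rnot_lt_le; intros Hpos.
  destruct (deriv_pos_increases _ _ (dot_flow_deriv_0 n A d w) Hpos) as [t [Ht Hlt]].
  rewrite dot_flow_0, Hd in Hlt.
  set (a := dot n w (flow n A y t)) in *; set (h := dot n w (flow n A d t)) in *.
  set (s := Rmax 0 ((M - a + 1) / h)).
  assert (Hs : M - a + 1 <= s * h).
  { replace (M - a + 1) with ((M - a + 1) / h * h) by (field; lra).
    apply Rmult_le_compat_r; [lra | apply Rmax_r]. }
  specialize (Hbd s t (Rmax_l _ _) ltac:(lra)).
  rewrite (dot_lincomb n w _ 1 (flow n A y t) s (flow n A d t)) in Hbd
    by (intros; rewrite flow_lincomb; ring).
  fold a h in Hbd; lra.
Qed.

Section Polyhedron.

Variables (n l1 l2 : nat) (xs xh : nat -> nat -> R).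

Local Notation m := (l1 + l2)%nat.
Local Notation X := (Xmat l1 xs xh).
Local Notation P := (polyP n l1 l2 xs xh).

Lemma polyP_iff y :
  P y <-> exists th, (forall p, (p < m)%nat -> 0 <= th p) /\ rsum l1 th = 1 /\
                     forall k, (k < n)%nat -> y k = mat_vec m X th k.
Proof.
  assert (HX : forall th k, mat_vec m X th k
                = rsum l1 (fun i => th i * xs i k) + rsum l2 (fun j => th (l1 + j)%nat * xh j k)).
  { intros th k; unfold mat_vec; rewrite rsum_split; f_equal; apply rsum_ext; intros i Hi;
      unfold Xmat.
    - destruct (Nat.ltb_spec i l1); [ring | lia].
    - destruct (Nat.ltb_spec (l1 + i) l1); [lia|].
      replace (l1 + i - l1)%nat with i by lia; ring. }
  split.
  - intros [th [thh [H1 [H2 [H3 H4]]]]].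
    exists (fun p => if (p <? l1)%nat then th p else thh (p - l1)%nat); split; [|split].
    + intros p Hp; destruct (Nat.ltb_spec p l1); [apply H1 | apply H3]; lia.
    + rewrite <- H2; apply rsum_ext; intros i Hi; destruct (Nat.ltb_spec i l1); [reflexivity | lia].
    + intros k Hk; rewrite H4, HX by auto; f_equal; apply rsum_ext; intros i Hi.
      * destruct (Nat.ltb_spec i l1); [reflexivity | lia].
      * destruct (Nat.ltb_spec (l1 + i) l1); [lia|].
        replace (l1 + i - l1)%nat with i by lia; reflexivity.
  - intros [th [H1 [H2 H3]]]; exists th, (fun j => th (l1 + j)%nat).
    split; [|split; [|split]]; auto; try (intros; apply H1; lia).
    intros k Hk; rewrite H3, HX by auto; reflexivity.
Qed.

Lemma polyP_dot_le w c y :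
  (forall p, (p < l1)%nat -> dot n w (col X p) <= c) ->
  (forall p, (l1 <= p < m)%nat -> dot n w (col X p) <= 0) ->
  P y -> dot n w y <= c.
Proof.
  intros Hv Hr Hy; apply polyP_iff in Hy as [th [Hth [Hsum Hy]]].
  rewrite (dot_ext n w y (mat_vec m X th)), dot_mat_vec by auto.
  apply Rle_trans with (rsum m (fun p => if (p <? l1)%nat then c * th p else 0)).
  - apply rsum_le; intros p Hp; specialize (Hth p Hp).
    destruct (Nat.ltb_spec p l1); [specialize (Hv p ltac:(lia)) | specialize (Hr p ltac:(lia))]; nra.
  - rewrite rsum_prefix, rsum_scal, Hsum; lra.
Qed.

Lemma polyP_vertex q : (q < l1)%nat -> P (col X q).
Proof.
  intros Hq; apply polyP_iff; exists (delta q); split; [|split].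
  - intros p _; unfold delta; destruct (q =? p)%nat; lra.
  - rewrite <- (rsum_delta l1 (fun _ => 1) q Hq); apply rsum_ext; intros; ring.
  - intros k _; unfold mat_vec, col; rewrite <- (rsum_delta m (X k) q) by lia.
    apply rsum_ext; intros; ring.
Qed.

Lemma polyP_vertex_ray q s :
  (0 < l1)%nat -> (l1 <= q < m)%nat -> 0 <= s -> P (fun k => col X 0 k + s * col X q k).
Proof.
  intros Hl1 Hq Hs; apply polyP_iff; exists (fun p => delta 0 p + s * delta q p); split; [|split].
  - intros p _; unfold delta; destruct (0 =? p)%nat, (q =? p)%nat; nra.
  - rewrite rsum_plus, rsum_scal, (rsum_zero l1 (delta q))
      by (intros; apply delta_neq; lia).
    rewrite <- (rsum_delta l1 (fun _ => 1) 0 Hl1).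
    rewrite (rsum_ext l1 (delta 0) (fun p => delta 0 p * 1)); [ring | intros; ring].
  - intros k _; unfold mat_vec.
    rewrite (rsum_ext m _ (fun p => delta 0 p * X k p + s * (delta q p * X k p))) by (intros; ring).
    unfold col.
    rewrite rsum_plus, rsum_scal, !(rsum_delta m (X k)) by lia; reflexivity.
Qed.

(* Generators of the cone of feasible directions of [P] at its generator [q]:
   for a vertex, the edges [x^p - x^q] and the rays; for a ray, the rays and
   [-x^q] (repeated in every vertex slot [p < l1]). *)
Definition tangent_gen (q p k : nat) : R :=
  if (p <? l1)%nat then (if (q <? l1)%nat then X k p else 0) - X k q else X k p.

Lemma dot_tangent_gen w q p :
  dot n w (tangent_gen q p)
  = if (p <? l1)%nat then (if (q <? l1)%nat then dot n w (col X p) else 0) - dot n w (col X q)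
    else dot n w (col X p).
Proof.
  unfold tangent_gen; destruct (p <? l1)%nat; [destruct (q <? l1)%nat|reflexivity].
  - rewrite (dot_lincomb n w _ 1 (col X p) (-1) (col X q)) by (intros; unfold col; ring); ring.
  - rewrite (dot_lincomb n w _ 0 (col X p) (-1) (col X q)) by (intros; unfold col; ring); ring.
Qed.

Section Necessity.

Variable A : nat -> nat -> R.
Hypothesis P_invariant : invariant_cont n A P.

Lemma polyP_flow y t : P y -> 0 <= t -> P (flow n A y t).
Proof.
  intros Hy Ht; apply (P_invariant (flow n A y)); [apply flow_is_solution | | exact Ht].
  apply polyP_iff in Hy as [th [H1 [H2 H3]]]; apply polyP_iff; exists th.
  split; [|split]; auto; intros k Hk; rewrite flow_0; auto.
Qed.

Lemma tangent_cone q :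
  (0 < l1)%nat -> (q < m)%nat -> in_cone n m (tangent_gen q) (mat_vec n A (col X q)).
Proof.
  intros Hl1 Hq; apply NNPP; intros Hcone.
  destruct (farkas n m _ _ Hcone) as [w [Hw Hpos]]; apply (Rlt_not_le _ _ Hpos).
  set (d := fun p => dot n w (col X p)).
  assert (Hgen : forall p, (p < m)%nat ->
            (if (p <? l1)%nat then (if (q <? l1)%nat then d p else 0) - d q else d p) <= 0)
    by (intros p Hp; unfold d; rewrite <- dot_tangent_gen; apply Hw, Hp).
  assert (Hray : forall p, (l1 <= p < m)%nat -> d p <= 0).
  { intros p Hp; specialize (Hgen p ltac:(lia)).
    destruct (Nat.ltb_spec p l1); [lia | exact Hgen]. }
  destruct (Nat.ltb_spec q l1) as [Hvertex|Hq1].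
  - apply flow_support; intros t Ht.
    apply polyP_dot_le; auto; [|apply polyP_flow; auto using polyP_vertex].
    intros p Hp; specialize (Hgen p ltac:(lia)).
    destruct (Nat.ltb_spec p l1); [unfold d in *; lra | lia].
  - apply (flow_recession n A (col X 0) _ w (rsum l1 (fun p => Rabs (d p)))).
    + intros s t Hs Ht; apply polyP_dot_le; auto; [|apply polyP_flow; auto using polyP_vertex_ray].
      intros p Hp; eapply Rle_trans; [apply Rle_abs|].
      apply (term_le_rsum l1 (fun p => Rabs (d p))); auto; intros; apply Rabs_pos.
    + specialize (Hgen 0%nat ltac:(lia)); specialize (Hray q ltac:(lia)).
      destruct (Nat.ltb_spec 0 l1); [|lia].
      unfold d in *; lra.
Qed.

End Necessity.

Lemma column_of_tangent_cone q b :
  (q < m)%nat -> in_cone n m (tangent_gen q) b ->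
  exists c : nat -> R,
    (forall p, (p < m)%nat -> p <> q -> 0 <= c p) /\
    (forall k, (k < n)%nat -> mat_vec m X c k = b k) /\ rsum l1 c = 0.
Proof.
  intros Hq [mu [Hmu Hb]].
  set (e := fun p => if (p <? l1)%nat then (if (q <? l1)%nat then mu p else 0) else mu p).
  exists (fun p => e p - delta q p * rsum l1 mu); split; [|split].
  - intros p Hp Hpq; rewrite delta_neq by auto; specialize (Hmu p Hp); unfold e.
    destruct (p <? l1)%nat, (q <? l1)%nat; lra.
  - intros k Hk; rewrite Hb by auto; unfold mat_vec.
    rewrite (rsum_ext m _ (fun p => X k p * e p + - rsum l1 mu * (delta q p * X k p)))
      by (intros; ring).
    rewrite (rsum_ext m (fun i => mu i * tangent_gen q i k)
               (fun p => X k p * e p + - X k q * (if (p <? l1)%nat then mu p else 0)))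
      by (intros p _; unfold e, tangent_gen; destruct (p <? l1)%nat, (q <? l1)%nat; ring).
    rewrite !rsum_plus, !rsum_scal, rsum_delta, rsum_prefix by auto; ring.
  - destruct (Nat.ltb_spec q l1) as [Hq1|Hq1].
    + rewrite (rsum_ext l1 (fun p => e p - delta q p * rsum l1 mu)
                 (fun p => mu p + - rsum l1 mu * (delta q p * 1))).
      * rewrite rsum_plus, rsum_scal, rsum_delta by auto; ring.
      * intros p Hp; unfold e.
        rewrite (proj2 (Nat.ltb_lt p l1) Hp); ring.
    + apply rsum_zero; intros p Hp; unfold e.
      rewrite (proj2 (Nat.ltb_lt p l1) Hp), delta_neq by lia.
      ring.
Qed.

End Polyhedron.

(** * Metzler systems *)

Lemma metzler_solution m L y :
  (forall p r, (p < m)%nat -> (r < m)%nat -> p <> r -> 0 <= L p r) ->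
  (forall p, (p < m)%nat -> 0 <= y p) ->
  exists th : R -> nat -> R, is_solution m L th /\ (forall p, (p < m)%nat -> th 0 p = y p) /\
    forall t p, 0 <= t -> (p < m)%nat -> 0 <= th t p.
Proof.
  intros HL Hy.
  set (c := rsum m (fun p => Rabs (L p p))).
  set (B := fun p r => L p r + c * delta p r).
  (* [e^{Lt} = e^{-ct} e^{Bt}] with [B = L + c I] entrywise nonnegative. *)
  exists (fun t p => exp (- c * t) * flow m B y t p); split; [|split].
  - intros t p Hp.
    replace (mat_vec m L (fun p => exp (- c * t) * flow m B y t p) p)
      with (- c * exp (- c * t) * flow m B y t p + exp (- c * t) * mat_vec m B (flow m B y t) p).
    + apply (derivable_pt_lim_mult (fun s => exp (- c * s)) (fun s => flow m B y s p)).
      * apply derivable_pt_lim_exp_scal.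
      * apply flow_is_solution, Hp.
    + unfold mat_vec.
      rewrite (rsum_ext m (fun r => B p r * flow m B y t r)
                 (fun r => L p r * flow m B y t r + c * (delta p r * flow m B y t r)))
        by (intros; unfold B; ring).
      rewrite rsum_plus, rsum_scal, rsum_delta by auto.
      rewrite (rsum_ext m (fun j => L p j * (exp (- c * t) * flow m B y t j))
                 (fun j => exp (- c * t) * (L p j * flow m B y t j))), rsum_scal
        by (intros; ring).
      ring.
  - intros p Hp; rewrite flow_0, Rmult_0_r, exp_0 by auto; ring.
  - intros t p Ht Hp; apply Rmult_le_pos; [left; apply exp_pos|].
    apply flow_nonneg; auto.
    intros i j Hi Hj; unfold B; destruct (Nat.eq_dec i j) as [<-|Hij].
    + assert (Rabs (L i i) <= c)
        by (apply (term_le_rsum m (fun p => Rabs (L p p))); auto; intros; apply Rabs_pos).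
      unfold delta; rewrite Nat.eqb_refl; pose proof (Rle_abs (- L i i)); rewrite Rabs_Ropp in *; lra.
    + rewrite delta_neq by auto; rewrite Rmult_0_r, Rplus_0_r; auto.
Qed.

Lemma rsum_solution_const m l L th t :
  is_solution m L th -> (l <= m)%nat -> (forall r, (r < m)%nat -> rsum l (fun p => L p r) = 0) ->
  rsum l (th t) = rsum l (th 0).
Proof.
  intros Hth Hl HL; apply (deriv_zero_const (fun s => rsum l (th s))); intros s.
  replace 0 with (rsum l (fun p => mat_vec m L (th s) p)).
  - apply derivable_pt_lim_rsum; intros p Hp; apply Hth; lia.
  - unfold mat_vec; rewrite rsum_swap; apply rsum_zero; intros r Hr.
    rewrite (rsum_ext l _ (fun p => th s r * L p r)), rsum_scal, HL by (auto; intros; ring).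
    ring.
Qed.

Lemma is_solution_mat_vec n m A L M th :
  is_solution m L th ->
  (forall k q, (k < n)%nat -> (q < m)%nat -> mat_vec m M (col L q) k = mat_vec n A (col M q) k) ->
  is_solution n A (fun t => mat_vec m M (th t)).
Proof.
  intros Hth HML t k Hk.
  change (mat_vec n A ?v k) with (dot n (A k) v); rewrite dot_mat_vec.
  rewrite (rsum_ext m _ (fun q => mat_vec m M (col L q) k * th t q))
    by (intros; rewrite HML; auto).
  change (rsum m (fun q => mat_vec m M (col L q) k * th t q))
    with (rsum m (fun q => dot m (M k) (col L q) * th t q)).
  rewrite <- dot_mat_vec.
  apply derivable_pt_lim_rsum; intros p Hp.
  apply (derivable_pt_lim_scal (fun s => th s p)), Hth, Hp.
Qed.

Lemma invariant_of_metzler n l1 l2 xs xh A (Lt : nat -> nat -> R) :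
  (forall p q, (p < l1 + l2)%nat -> (q < l1 + l2)%nat -> p <> q -> 0 <= Lt p q) ->
  (forall k q, (k < n)%nat -> (q < l1 + l2)%nat ->
     mat_vec (l1 + l2) (Xmat l1 xs xh) (col Lt q) k = mat_vec n A (col (Xmat l1 xs xh) q) k) ->
  (forall q, (q < l1 + l2)%nat -> rsum l1 (fun p => Lt p q) = 0) ->
  invariant_cont n A (polyP n l1 l2 xs xh).
Proof.
  intros HL HXL Hsum x Hx Hx0 t Ht.
  apply polyP_iff in Hx0 as [th0 [Hth0 [Hsum0 Hx0]]]; apply polyP_iff.
  destruct (metzler_solution (l1 + l2) Lt th0 HL Hth0) as [th [Hth [Hinit Hnn]]].
  assert (Hz := is_solution_mat_vec n (l1 + l2) A Lt (Xmat l1 xs xh) th Hth HXL).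
  exists (th t); split; [|split].
  - intros p Hp; apply Hnn; auto.
  - rewrite (rsum_solution_const (l1 + l2) l1 Lt th t Hth), <- Hsum0 by (auto; lia).
    apply rsum_ext; intros p Hp; apply Hinit; lia.
  - intros k Hk; apply (is_solution_unique n A x _ t k Hx Hz); auto.
    intros j Hj; rewrite Hx0 by auto; apply rsum_ext; intros p Hp; rewrite Hinit; auto.
Qed.

Lemma fin_choice m (P : nat -> (nat -> R) -> Prop) :
  (forall q, (q < m)%nat -> exists c, P q c) ->
  exists C : nat -> nat -> R, forall q, (q < m)%nat -> P q (C q).
Proof.
  induction m as [|m IH]; intros H; [exists (fun _ _ => 0); intros; lia|].
  destruct IH as [C HC]; [intros; apply H; lia|].
  destruct (H m ltac:(lia)) as [c Hc].
  exists (fun q => if (q =? m)%nat then c else C q); intros q Hq.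
  destruct (Nat.eqb_spec q m) as [->|]; [exact Hc | apply HC; lia].
Qed.

Theorem theorem3p8 (n l1 l2 : nat) (xs xh : nat -> nat -> R) (A : nat -> nat -> R) :
  (1 <= l1)%nat ->
  (invariant_cont n A (polyP n l1 l2 xs xh) <->
   exists Lt : nat -> nat -> R,
     (forall p q, (p < l1 + l2)%nat -> (q < l1 + l2)%nat -> p <> q -> 0 <= Lt p q) /\
     (forall k q, (k < n)%nat -> (q < l1 + l2)%nat ->
        rsum (l1 + l2) (fun p => Xmat l1 xs xh k p * Lt p q)
        = rsum n (fun j => A k j * Xmat l1 xs xh j q)) /\
     (forall q, (q < l1 + l2)%nat -> rsum l1 (fun p => Lt p q) = 0)).
Proof.
  intros Hl1; split.
  - intros Hinv.
    destruct (fin_choice (l1 + l2) (fun q c =>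
        (forall p, (p < l1 + l2)%nat -> p <> q -> 0 <= c p) /\
        (forall k, (k < n)%nat -> mat_vec (l1 + l2) (Xmat l1 xs xh) c k
                                  = mat_vec n A (col (Xmat l1 xs xh) q) k) /\
        rsum l1 c = 0)) as [C HC].
    { intros q Hq; apply column_of_tangent_cone, tangent_cone; auto. }
    exists (fun p q => C q p); split; [|split]; intros; apply HC; auto.
  - intros [Lt [Hoff [HXL Hsum]]]; apply (invariant_of_metzler n l1 l2 xs xh A Lt); auto.
Qed.
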